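(* Let $N_c, N_v$ be positive integers, let ${\tt dVc}\in(0,\infty)^{N_c}$ and ${\tt dVv}\in(0,\infty)^{N_v}$, and define $\langle {\tt a},{\tt b}\rangle_c={\tt a}^\top\mathrm{diag}({\tt dVc})\,{\tt b}$ on $\mathbb R^{N_c}$ and $\langle {\tt a},{\tt b}\rangle_v={\tt a}^\top\mathrm{diag}({\tt dVv})\,{\tt b}$ on $\mathbb R^{N_v}$. Let $R:\mathbb R\to(0,\infty)$ be continuously differentiable and non-decreasing, fix $p_0\in\mathbb R$, and set $Q(p)=\int_{p_0}^p \frac{1}{R(q)}\,\mathrm dq$ and $e_{int}(p)=\int_{p_0}^p\frac{R(p)-R(q)}{R(q)}\,\mathrm dq$, all functions being applied componentwise to vectors. Let ${\sf Interp}_{v\leftarrow c}$ be a fixed real $N_v\times N_c$ matrix. Let ${\tt p}(t)\in\mathbb R^{N_c}$ and ${\tt v}(t)\in\mathbb R^{N_v}$, $t\in[0,T]$, be continuously differentiable, set ${\tt rho}=R({\tt p})$ and ${\tt rv}=\mathrm{diag}({\sf Interp}_{v\leftarrow c}{\tt rho})\,{\tt v}$, and suppose that for every $t$ there are real matrices ${\sf DIVr}(t)$ ($N_c\times N_v$), ${\sf rGRAD}(t)$, ${\sf GRAD}(t)$ ($N_v\times N_c$) and ${\sf ADVEC}(t)$ ($N_v\times N_v$) such that (i) ${\sf DIVr}+{\sf rGRAD}^*=0$; (ii) ${\sf rGRAD}\,Q({\tt p})={\sf GRAD}\,{\tt p}$; (iii) ${\sf ADVEC}+{\sf ADVEC}^*=\mathrm{diag}({\sf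 Interp}_{v\leftarrow c}\,{\sf DIVr}\,{\tt v})$; and the semi-discrete isentropic Euler equations $$\frac{\mathrm d\,{\tt rho}}{\mathrm dt}+{\sf DIVr}\,{\tt v}=0,\qquad \frac{\mathrm d\,{\tt rv}}{\mathrm dt}+{\sf ADVEC}\,{\tt v}+{\sf GRAD}\,{\tt p}=0$$ hold. Then the discrete total energy ${\tt E}(t)=\langle {\tt c1},e_{int}({\tt p})\rangle_c+\frac12\langle {\tt v},{\tt rv}\rangle_v$, where ${\tt c1}$ is the vector of all ones, satisfies $\frac{\mathrm d{\tt E}}{\mathrm dt}=0$.
   Context: Adjoints are taken with respect to the weighted inner products: for a real matrix ${\sf A}$ mapping $\mathbb R^{N_{in}}$ (weights ${\tt dV}_{in}$) to $\mathbb R^{N_{out}}$ (weights ${\tt dV}_{out}$), ${\sf A}^*=\mathrm{diag}({\tt dV}_{in})^{-1}{\sf A}^\top\mathrm{diag}({\tt dV}_{out})$, so that $\langle {\tt x},{\sf A}{\tt y}\rangle_{out}=\langle{\sf A}^*{\tt x},{\tt y}\rangle_{in}$. Here $\mathrm{diag}({\tt a})$ is the diagonal matrix with the entries of ${\tt a}$ on its diagonal. The matrices ${\sf DIVr},{\sf rGRAD},{\sf GRAD},{\sf ADVEC}$ are allowed to depend on the state at time $t$. *)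

From Stdlib Require Import Reals.
From Coquelicot Require Import Coquelicot.
From HB Require Import structures.
From mathcomp Require Import all_boot all_order all_algebra.
From mathcomp Require Import Rstruct.
Set Implicit Arguments. Unset Strict Implicit. Unset Printing Implicit Defensive.
Import GRing.Theory.

Local Open Scope ring_scope.

Definition diagv (n : nat) (a : 'cV[R]_n) : 'M[R]_n := diag_mx a^T.

Definition winner (n : nat) (dV a b : 'cV[R]_n) : R := (a^T *m diagv dV *m b) 0 0.

(* adjoint w.r.t. weighted inner products:
   A : R^{n_in} (weights dVin) -> R^{n_out} (weights dVout),
   A^* = diag(dVin)^{-1} A^T diag(dVout) *)
Definition wadj (nin nout : nat) (dVin : 'cV[R]_nin) (dVout : 'cV[R]_nout)
  (A : 'M[R]_(nout, nin)) : 'M[R]_(nin, nout) :=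
  invmx (diagv dVin) *m A^T *m diagv dVout.

Definition cw (n : nat) (f : R -> R) (x : 'cV[R]_n) : 'cV[R]_n := map_mx f x.

Definition vderiv (n : nat) (f : R -> 'cV[R]_n) (t : R) (df : 'cV[R]_n) : Prop :=
  forall i : 'I_n, is_derive (fun s => f s i 0) t (df i 0).

Definition Qfun (Rf : R -> R) (p0 p : R) : R := RInt (fun q => / Rf q)%R p0 p.

Definition eint (Rf : R -> R) (p0 p : R) : R :=
  RInt (fun q => (Rf p - Rf q) / Rf q)%R p0 p.

Definition ones (n : nat) : 'cV[R]_n := const_mx 1.

Definition energy (Nc Nv : nat) (dVc : 'cV[R]_Nc) (dVv : 'cV[R]_Nv)
  (Rf : R -> R) (p0 : R) (Interp : 'M[R]_(Nv, Nc))
  (p : 'cV[R]_Nc) (v : 'cV[R]_Nv) : R :=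
  winner dVc (ones Nc) (cw (eint Rf p0) p)
  + 2^-1 * winner dVv v (diagv (Interp *m cw Rf p) *m v).

(* Since Q' = 1/R, the internal energy e_int(p) = R(p) Q(p) - (p - p0) has time
   derivative Q(p) d(rho)/dt, and with a = Interp rho the kinetic energy
   1/2 <v, diag(a) v>_v has derivative <v, d(rv)/dt>_v - 1/2 <v, diag(da/dt) v>_v.
   Substituting the two evolution equations, (i) and (ii) turn <Q(p), DIVr v>_c
   into -<v, GRAD p>_v, while (iii) says 1/2 <v, diag(Interp DIVr v) v>_v equals
   <v, ADVEC v>_v, so every term cancels. *)

From Stdlib Require Import Reals.
From Coquelicot Require Import Coquelicot.
From HB Require Import structures.
From mathcomp Require Import all_boot all_order all_algebra.
From mathcomp Require Import Rstruct.
From mathcomp Require Import ring lra.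
Set Implicit Arguments. Unset Strict Implicit. Unset Printing Implicit Defensive.
Import GRing.Theory Num.Theory.
Local Open Scope ring_scope.

(* Coquelicot's differentiation rules, restated with MathComp's operations on R
   (convertible to Coquelicot's, but not syntactically equal). *)
Lemma is_deriveD (f g : R -> R) t a b : is_derive f t a -> is_derive g t b ->
  is_derive (fun s => f s + g s) t (a + b).
Proof. exact: is_derive_plus. Qed.

Lemma is_deriveB (f g : R -> R) t a b : is_derive f t a -> is_derive g t b ->
  is_derive (fun s => f s - g s) t (a - b).
Proof. exact: is_derive_minus. Qed.

Lemma is_deriveM (f g : R -> R) t a b : is_derive f t a -> is_derive g t b ->
  is_derive (fun s => f s * g s) t (a * g t + f t * b).
Proof. by move=> Hf Hg; apply: is_derive_mult => // x y; apply: mulrC. Qed.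

Lemma is_deriveZ (f : R -> R) (c : R) t a : is_derive f t a ->
  is_derive (fun s => c * f s) t (c * a).
Proof. exact: is_derive_scal. Qed.

Lemma is_derive_sum (I : Type) (r : seq I) (f : I -> R -> R) (df : I -> R) t :
  (forall i, is_derive (f i) t (df i)) ->
  is_derive (fun s => \sum_(i <- r) f i s) t (\sum_(i <- r) df i).
Proof.
move=> Hf; elim: r => [|i r IHr].
  rewrite big_nil; apply: (is_derive_ext (fun _ : R => 0 : R)); last exact: is_derive_const.
  by move=> s; rewrite big_nil.
rewrite big_cons; apply: (is_derive_ext (fun s => f i s + \sum_(j <- r) f j s)).
  by move=> s; rewrite big_cons.
exact: is_deriveD.
Qed.

Lemma vderiv_unique n (f : R -> 'cV[R]_n) t d1 d2 :
  vderiv f t d1 -> vderiv f t d2 -> d1 = d2.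
Proof.
move=> H1 H2; apply/matrixP => i j; rewrite ord1.
by rewrite -(is_derive_unique _ _ _ (H1 i)) (is_derive_unique _ _ _ (H2 i)).
Qed.

Lemma vderiv_cst n (c : 'cV[R]_n) t : vderiv (fun _ => c) t 0.
Proof. by move=> i; rewrite mxE; apply: is_derive_const. Qed.

Lemma vderiv_mulmxl m n (A : 'M[R]_(m, n)) (x : R -> 'cV[R]_n) t dx :
  vderiv x t dx -> vderiv (fun s => A *m x s) t (A *m dx).
Proof.
move=> Hx j; apply: (is_derive_ext (fun s => \sum_k A j k * x s k 0)).
  by move=> s; rewrite mxE.
by rewrite mxE; apply: is_derive_sum => k; apply: is_deriveZ.
Qed.

Lemma diagv_mulmx n (a b : 'cV[R]_n) i : (diagv a *m b) i 0 = a i 0 * b i 0.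
Proof. by rewrite /diagv mul_diag_mx !mxE. Qed.

Lemma vderiv_diagv_mulmx n (a b : R -> 'cV[R]_n) t da db :
  vderiv a t da -> vderiv b t db ->
  vderiv (fun s => diagv (a s) *m b s) t (diagv da *m b t + diagv (a t) *m db).
Proof.
move=> Ha Hb i; apply: (is_derive_ext (fun s => a s i 0 * b s i 0)).
  by move=> s; rewrite diagv_mulmx.
by rewrite mxE !diagv_mulmx; apply: is_deriveM.
Qed.

Lemma winner_sum n (dV a b : 'cV[R]_n) :
  winner dV a b = \sum_i dV i 0 * (a i 0 * b i 0).
Proof.
rewrite /winner /diagv mxE; apply: eq_bigr => i _.
by rewrite mul_mx_diag !mxE mulrAC mulrC.
Qed.

Lemma is_derive_winner n (dV : 'cV[R]_n) (a b : R -> 'cV[R]_n) t da db :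
  vderiv a t da -> vderiv b t db ->
  is_derive (fun s => winner dV (a s) (b s)) t
            (winner dV da (b t) + winner dV (a t) db).
Proof.
move=> Ha Hb; apply: (is_derive_ext (fun s => \sum_i dV i 0 * (a s i 0 * b s i 0))).
  by move=> s; rewrite winner_sum.
rewrite !winner_sum -big_split; apply: is_derive_sum => i /=.
by rewrite -mulrDr; apply/is_deriveZ/is_deriveM.
Qed.

Lemma winnerC n (dV a b : 'cV[R]_n) : winner dV a b = winner dV b a.
Proof. by rewrite !winner_sum; apply: eq_bigr => i _; rewrite [b i 0 * _]mulrC. Qed.

Lemma winner0l n (dV b : 'cV[R]_n) : winner dV 0 b = 0.
Proof. by rewrite /winner trmx0 !mul0mx mxE. Qed.

Lemma winnerDr n (dV a b c : 'cV[R]_n) :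
  winner dV a (b + c) = winner dV a b + winner dV a c.
Proof. by rewrite /winner mulmxDr mxE. Qed.

Lemma winnerNr n (dV a b : 'cV[R]_n) : winner dV a (- b) = - winner dV a b.
Proof. by rewrite /winner mulmxN mxE. Qed.

Lemma winner_diagv n (dV a b c : 'cV[R]_n) :
  winner dV a (diagv c *m b) = winner dV (diagv c *m a) b.
Proof.
rewrite !winner_sum; apply: eq_bigr => i _.
by rewrite !diagv_mulmx; ring.
Qed.

Lemma winner_ones_diagv n (dV b c : 'cV[R]_n) :
  winner dV (ones n) (diagv c *m b) = winner dV c b.
Proof.
rewrite winner_diagv; congr winner; apply/matrixP => i j.
by rewrite ord1 diagv_mulmx mxE mulr1.
Qed.

Lemma diagvN n (d : 'cV[R]_n) : diagv (- d) = - diagv d.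
Proof. by rewrite /diagv linearN /= raddfN. Qed.

Lemma diagv_unitmx n (d : 'cV[R]_n) : (forall i, d i 0 != 0) -> diagv d \in unitmx.
Proof.
move=> Hd; rewrite unitmxE /diagv det_diag unitfE.
by apply/prodf_neq0 => i _; rewrite mxE.
Qed.

Lemma winner_wadj nin nout (dVin : 'cV[R]_nin) (dVout : 'cV[R]_nout)
    (A : 'M[R]_(nout, nin)) x y :
  diagv dVin \in unitmx ->
  winner dVin (wadj dVin dVout A *m x) y = winner dVout x (A *m y).
Proof.
move=> Hin; rewrite winnerC [RHS]winnerC /winner /wadj !mulmxA mulmxK //.
by rewrite trmx_mul.
Qed.

Lemma winner_skew_adjoint nc nv (dVc : 'cV[R]_nc) (dVv : 'cV[R]_nv)
    (D : 'M[R]_(nc, nv)) (G : 'M[R]_(nv, nc)) q v :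
  diagv dVc \in unitmx -> D + wadj dVc dVv G = 0 ->
  winner dVc q (D *m v) = - winner dVv v (G *m q).
Proof.
move=> Hc /eqP; rewrite addr_eq0 => /eqP ->.
by rewrite mulNmx winnerNr winnerC winner_wadj.
Qed.

Lemma winner_diagv_sym_part n (dV d v : 'cV[R]_n) (A : 'M[R]_n) :
  diagv dV \in unitmx -> A + wadj dV dV A = diagv d ->
  winner dV v (diagv d *m v) = 2 * winner dV v (A *m v).
Proof.
move=> HV <-; rewrite mulmxDl winnerDr [winner _ v (wadj _ _ _ *m v)]winnerC.
by rewrite winner_wadj //; lra.
Qed.

Lemma energy_balance Nc Nv (dVc : 'cV[R]_Nc) (dVv : 'cV[R]_Nv)
    (DIVr : 'M[R]_(Nc, Nv)) (rGRAD GRAD : 'M[R]_(Nv, Nc)) (ADVEC : 'M[R]_Nv)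
    (Interp : 'M[R]_(Nv, Nc)) (q p : 'cV[R]_Nc) (v : 'cV[R]_Nv) :
  diagv dVc \in unitmx -> diagv dVv \in unitmx ->
  DIVr + wadj dVc dVv rGRAD = 0 -> rGRAD *m q = GRAD *m p ->
  ADVEC + wadj dVv dVv ADVEC = diagv (Interp *m (DIVr *m v)) ->
  winner dVc q (- (DIVr *m v)) + winner dVv v (- (ADVEC *m v + GRAD *m p))
    - 2^-1 * winner dVv v (diagv (Interp *m - (DIVr *m v)) *m v) = 0.
Proof.
move=> Hc Hv Hi Hii Hiii.
rewrite mulmxN diagvN mulNmx !winnerNr winnerDr.
rewrite (winner_skew_adjoint q v Hc Hi) Hii (winner_diagv_sym_part v Hv Hiii).
lra.
Qed.

Section InternalEnergy.

Variables (Rf : R -> R) (p0 : R).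
Hypothesis Rf_cont : forall x, continuous Rf x.
Hypothesis Rf_neq0 : forall x, Rf x != 0.

Lemma continuous_invRf x : continuous (fun q => / Rf q)%R x.
Proof. by apply: continuous_Rinv_comp => //; apply/eqP. Qed.

Lemma ex_RInt_invRf a b : ex_RInt (fun q => / Rf q)%R a b.
Proof. by apply: ex_RInt_continuous => x _; apply: continuous_invRf. Qed.

Lemma is_derive_Qfun x : is_derive (Qfun Rf p0) x (/ Rf x)%R.
Proof.
apply: (is_derive_RInt (fun q => / Rf q)%R _ p0); last exact: continuous_invRf.
by apply: filter_forall => b; apply/RInt_correct/ex_RInt_invRf.
Qed.

Lemma eintE x : eint Rf p0 x = Rf x * Qfun Rf p0 x - (x - p0).
Proof.
rewrite /eint /Qfun (RInt_ext _ (fun q => minus (scal (Rf x) (/ Rf q)%R) 1%R)).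
  rewrite RInt_minus ?RInt_scal ?RInt_const; last first.
  - exact: ex_RInt_const.
  - exact/ex_RInt_scal/ex_RInt_invRf.
  - exact: ex_RInt_invRf.
  rewrite /minus /plus /Hierarchy.opp /scal /= /mult /=.
  by rewrite !(RminusE, RplusE, RmultE, RoppE); ring.
move=> q _; rewrite /minus /plus /Hierarchy.opp /scal /= /mult /=.
by rewrite !(RdivE, RinvE, RminusE, RplusE, RmultE, RoppE); field.
Qed.

Lemma is_derive_eint_comp (q : R -> R) t dq dr :
  is_derive q t dq -> is_derive (fun s => Rf (q s)) t dr ->
  is_derive (fun s => eint Rf p0 (q s)) t (dr * Qfun Rf p0 (q t)).
Proof.
move=> Hq Hr.
apply: (is_derive_ext (fun s => Rf (q s) * Qfun Rf p0 (q s) - (q s - p0))).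
  by move=> s; rewrite eintE.
have HQ := is_derive_comp _ _ _ _ _ (is_derive_Qfun (q t)) Hq.
have := is_deriveB (is_deriveM Hr HQ) (is_deriveB Hq (is_derive_const p0 t)).
congr is_derive; rewrite /scal /= /mult /= /zero /=.
by rewrite !(RinvE, RmultE) R0E; field.
Qed.

Lemma vderiv_cw_eint n (p : R -> 'cV[R]_n) t dp drho :
  vderiv p t dp -> vderiv (fun s => cw Rf (p s)) t drho ->
  vderiv (fun s => cw (eint Rf p0) (p s)) t (diagv (cw (Qfun Rf p0) (p t)) *m drho).
Proof.
move=> Hp Hrho i; rewrite diagv_mulmx mxE mulrC.
apply: (is_derive_ext (fun s => eint Rf p0 (p s i 0))); first by move=> s; rewrite mxE.
apply: is_derive_eint_comp (Hp i) _.
by apply: is_derive_ext (Hrho i) => s; rewrite mxE.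
Qed.

Lemma is_derive_energy Nc Nv (dVc : 'cV[R]_Nc) (dVv : 'cV[R]_Nv)
    (Interp : 'M[R]_(Nv, Nc)) (p : R -> 'cV[R]_Nc) (v : R -> 'cV[R]_Nv) t dp dv drho :
  vderiv p t dp -> vderiv v t dv -> vderiv (fun s => cw Rf (p s)) t drho ->
  is_derive (fun s => energy dVc dVv Rf p0 Interp (p s) (v s)) t
    (winner dVc (cw (Qfun Rf p0) (p t)) drho
     + winner dVv (v t) (diagv (Interp *m drho) *m v t
                         + diagv (Interp *m cw Rf (p t)) *m dv)
     - 2^-1 * winner dVv (v t) (diagv (Interp *m drho) *m v t)).
Proof.
move=> Hp Hv Hrho.
have Hrv := vderiv_diagv_mulmx (vderiv_mulmxl Interp Hrho) Hv.
have Hint := is_derive_winner dVc (vderiv_cst (ones Nc) t) (vderiv_cw_eint Hp Hrho).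
have := is_deriveD Hint (is_deriveZ (2^-1) (is_derive_winner dVv Hv Hrv)).
congr is_derive.
rewrite winner0l add0r winner_ones_diagv winnerDr.
rewrite [winner dVv dv _]winner_diagv [winner dVv (diagv _ *m dv) _]winnerC.
lra.
Qed.

End InternalEnergy.

Theorem mainTheorem1
  (Nc Nv : nat) (HNc : (0 < Nc)%N) (HNv : (0 < Nv)%N)
  (dVc : 'cV[R]_Nc) (dVv : 'cV[R]_Nv)
  (HdVc : forall i, 0 < dVc i 0) (HdVv : forall i, 0 < dVv i 0)
  (Rf dRf : R -> R)
  (HRpos : forall x, 0 < Rf x)
  (HRder : forall x, is_derive Rf x (dRf x))
  (HRC1 : forall x, continuous dRf x)
  (HRmono : forall x y, x <= y -> Rf x <= Rf y)
  (p0 : R) (Interp : 'M[R]_(Nv, Nc)) (T : R)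
  (p dp : R -> 'cV[R]_Nc) (v dv : R -> 'cV[R]_Nv)
  (DIVr : R -> 'M[R]_(Nc, Nv)) (rGRAD GRAD : R -> 'M[R]_(Nv, Nc))
  (ADVEC : R -> 'M[R]_Nv)
  (Hp : forall t, 0 < t < T -> vderiv p t (dp t))
  (Hv : forall t, 0 < t < T -> vderiv v t (dv t))
  (Hdp : forall t, 0 < t < T -> forall i, continuous (fun s => dp s i 0) t)
  (Hdv : forall t, 0 < t < T -> forall i, continuous (fun s => dv s i 0) t)
  (Hi : forall t, 0 < t < T -> DIVr t + wadj dVc dVv (rGRAD t) = 0)
  (Hii : forall t, 0 < t < T -> rGRAD t *m cw (Qfun Rf p0) (p t) = GRAD t *m p t)
  (Hiii : forall t, 0 < t < T ->
     ADVEC t + wadj dVv dVv (ADVEC t) = diagv (Interp *m (DIVr t *m v t)))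
  (Hmass : forall t, 0 < t < T ->
     vderiv (fun s => cw Rf (p s)) t (- (DIVr t *m v t)))
  (Hmom : forall t, 0 < t < T ->
     vderiv (fun s => diagv (Interp *m cw Rf (p s)) *m v s) t
            (- (ADVEC t *m v t + GRAD t *m p t))) :
  forall t, 0 < t < T ->
    is_derive (fun s => energy dVc dVv Rf p0 Interp (p s) (v s)) t 0.
Proof.
(* The balance holds at each time separately: the sizes being positive, the
   monotonicity and C^1 regularity of R and the continuity of dp, dv are unused. *)
move=> t Ht.
have Rf_cont x : continuous Rf x by apply: ex_derive_continuous; exists (dRf x).
have Rf_neq0 x : Rf x != 0 by apply: lt0r_neq0.
have HcU : diagv dVc \in unitmx by apply: diagv_unitmx => i; apply: lt0r_neq0.
have HvU : diagv dVv \in unitmx by apply: diagv_unitmx => i; apply: lt0r_neq0.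
have Hrv := vderiv_diagv_mulmx (vderiv_mulmxl Interp (Hmass t Ht)) (Hv t Ht).
rewrite -(energy_balance HcU HvU (Hi t Ht) (Hii t Ht) (Hiii t Ht)).
rewrite (vderiv_unique (Hmom t Ht) Hrv).
exact (is_derive_energy p0 Rf_cont Rf_neq0 dVc dVv Interp (Hp t Ht) (Hv t Ht) (Hmass t Ht)).
Qed.
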